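(* Let $k$ be a positive integer and $p$ a prime with $p\equiv 3,5,$ or $7\pmod 8$. Then for every non-negative integer $n$, $\mathcal{J}_6(24n+3)\equiv \mathcal{J}_6(3p^{2k}(8n+1))\pmod 2$.
   Context: Let $q=e^{2\pi i\tau}$, $(a;q)_\infty=\prod_{j\ge0}(1-aq^j)$, and $\eta(\tau)=q^{1/24}(q;q)_\infty$. Define $$j_6(\tau)=\left(\frac{\eta(2\tau)\eta(3\tau)^3}{\eta(\tau)\eta(6\tau)^3}\right)^3-3=\frac1q+\sum_{n\ge0}\mathcal{J}_6(n)q^n.$$ *)

From mathcomp Require Import all_boot all_order all_algebra.
Set Implicit Arguments. Unset Strict Implicit. Unset Printing Implicit Defensive.
Import GRing.Theory Num.Theory.
Local Open Scope ring_scope.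

(* Truncation of (q^a;q^a)_oo = prod_{j>=1} (1 - q^{a j}) : all factors
   with a*j <= N (for a >= 1) are kept, so coefficients of q^m, m <= N,
   agree with those of the infinite product. *)
Definition qpoch_tr (a N : nat) : {poly int} :=
  \prod_(1 <= j < N.+1) (1 - 'X^(a * j)).

(* Truncation of 1/(q^a;q^a)_oo = prod_{j>=1} sum_{i>=0} q^{a j i};
   exact in coefficients of q^m, m <= N. *)
Definition qpoch_inv_tr (a N : nat) : {poly int} :=
  \prod_(1 <= j < N.+1) \sum_(0 <= i < N.+1) 'X^(a * j * i).

(* Truncation (exact up to q^N) of
   P(q) = ( (q^2;q^2)_oo (q^3;q^3)_oo^3 / ((q;q)_oo (q^6;q^6)_oo^3) )^3,
   so that j_6 = q^{-1} P(q) - 3. *)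
Definition P_tr (N : nat) : {poly int} :=
  (qpoch_tr 2 N * qpoch_tr 3 N ^+ 3 * qpoch_inv_tr 1 N * qpoch_inv_tr 6 N ^+ 3) ^+ 3.

Definition Pcoef (m : nat) : int := (P_tr m)`_m.

(* j_6(tau) = 1/q + sum_{n>=0} J6(n) q^n, i.e. J6 n = a(n+1) - 3*[n=0]. *)
Definition J6 (n : nat) : int := Pcoef n.+1 - (if n == 0%N then 3 else 0).

From mathcomp Require Import all_boot all_order all_algebra zify ring.
Set Implicit Arguments. Unset Strict Implicit. Unset Printing Implicit Defensive.
Import GRing.Theory.
Local Open Scope ring_scope.

(* Write f_k = (q^k; q^k)_oo and psi(q) = sum_n q^(n(n+1)/2).  Modulo 2,
   f_2 = f_1^2 and f_6 = f_3^2, so q (j_6 + 3) = f_1^3 / f_3^9, and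
   f_1^3 = psi(q) by Jacobi's identity.  Extracting the terms q^(3n+1), then
   q^(4n+1), then q^(2n), with the help of psi(q)^(2^e) = psi(q^(2^e)) and
   psi(q) psi(q^3) = psi(q^4) + q psi(q^12), leaves sum_n J_6(24n+3) q^n = psi(q):
   J_6(24n+3) is odd iff 8n+1 is a square, which is unchanged when 8n+1 is
   multiplied by the square of an odd prime.
   The theta identities, and psi(q) f_1 = f_1(q^4) behind Jacobi's identity,
   count odd solutions of x^2 + 3y^2 = 4M mod 2: multiplication by a unit of
   Z[(1 + sqrt(-3))/2] is an involution on them whose fixed points are x = y and
   x = 3y.  Euler's pentagonal theorem mod 2 comes from Shanks' finite form.
   Power series are polynomials compared modulo X^N. *)

(** * Power series modulo X^N *)

Section CongruenceModXn.

Variable R : nzRingType.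
Implicit Types p q r : {poly R}.

Definition eqmodX N p q := take_poly N p = take_poly N q.

Lemma eqmodXP N p q : eqmodX N p q <-> forall i, (i < N)%N -> p`_i = q`_i.
Proof.
split=> [Epq i ltiN | Epq]; last first.
  by apply/polyP => i; rewrite !coef_take_poly; case: ifP => // /Epq.
by have := congr1 (fun r => r`_i) Epq; rewrite /= !coef_take_poly ltiN.
Qed.

Lemma eqmodX_le M N p q : (M <= N)%N -> eqmodX N p q -> eqmodX M p q.
Proof.
by move=> leMN /eqmodXP Epq; apply/eqmodXP => i ltiM; rewrite Epq // (leq_trans ltiM).
Qed.

Lemma eqmodXD N p p' q q' :
  eqmodX N p p' -> eqmodX N q q' -> eqmodX N (p + q) (p' + q').
Proof. by rewrite /eqmodX !take_polyD => -> ->. Qed.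

Lemma eqmodXM N p p' q q' :
  eqmodX N p p' -> eqmodX N q q' -> eqmodX N (p * q) (p' * q').
Proof.
move=> /eqmodXP Ep /eqmodXP Eq; apply/eqmodXP => i ltiN.
rewrite !coefM; apply: eq_bigr => j _.
have ltji := ltn_ord j; rewrite Ep ?Eq //; lia.
Qed.

Lemma eqmodXMl N p q q' : eqmodX N q q' -> eqmodX N (p * q) (p * q').
Proof. exact: eqmodXM. Qed.

Lemma eqmodXMr N p p' q : eqmodX N p p' -> eqmodX N (p * q) (p' * q).
Proof. by move/eqmodXM; apply. Qed.

Lemma eqmodXX N p q n : eqmodX N p q -> eqmodX N (p ^+ n) (q ^+ n).
Proof.
move=> Epq; elim: n => [|n IHn]; first by rewrite !expr0.
by rewrite !exprS; apply: eqmodXM.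
Qed.

Lemma eqmodX_prod1 N m n (F : nat -> {poly R}) :
  (forall i, (m <= i < n)%N -> eqmodX N (F i) 1) ->
  eqmodX N (\prod_(m <= i < n) F i) 1.
Proof.
move=> EF; rewrite big_nat; elim/big_ind: _ => // p q Ep Eq.
by rewrite -(mulr1 1); apply: eqmodXM.
Qed.

Lemma eqmodX_comp N k p q : (0 < k)%N ->
  eqmodX N p q -> eqmodX (k * N) (p \Po 'X^k) (q \Po 'X^k).
Proof.
move=> k_gt0 /eqmodXP Epq; apply/eqmodXP => i ltikN; rewrite !coef_comp_poly_Xn //.
by case: ifP => // _; rewrite Epq // ltn_divLR // mulnC.
Qed.

Lemma eqmodX_mulIr N p q r : r`_0 = 1 ->
  eqmodX N (p * r) (q * r) -> eqmodX N p q.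
Proof.
move=> r0 /eqmodXP Epqr; apply/eqmodXP; suff Ed i : (i < N)%N -> (p - q)`_i = 0.
  by move=> i /Ed /eqP; rewrite coefB subr_eq0 => /eqP.
elim/ltn_ind: i => i IHi ltiN.
move: (Epqr i ltiN) => /eqP; rewrite -subr_eq0 -coefB -mulrBl coefM.
rewrite big_ord_recr /= subnn r0 mulr1 big1 ?add0r => [/eqP //|j _].
have ltji := ltn_ord j; rewrite IHi ?mul0r //; lia.
Qed.

End CongruenceModXn.

Section Dissection.

Variable R : comNzRingType.
Implicit Types a b p q : {poly R}.

Definition dissect k r p := \poly_(i < size p) p`_(k * i + r).

Variables (k r : nat).
Hypotheses (k_gt0 : (0 < k)%N) (ltrk : (r < k)%N).

Lemma coef_dissect p i : (dissect k r p)`_i = p`_(k * i + r).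
Proof.
rewrite coef_poly; case: ltnP => // le_p_i.
by rewrite nth_default // (leq_trans le_p_i) //; nia.
Qed.

Lemma dissectD p q : dissect k r (p + q) = dissect k r p + dissect k r q.
Proof. by apply/polyP => i; rewrite coefD !coef_dissect coefD. Qed.

Lemma dissect_compXnM a b : dissect k r ((a \Po 'X^k) * b) = a * dissect k r b.
Proof.
elim/poly_ind: a b => [|a c IHa] b.
  by apply/polyP => i; rewrite comp_poly0 !mul0r coef_dissect !coef0.
rewrite comp_polyD comp_polyM comp_polyX comp_polyC mulrDl dissectD -mulrA IHa.
have -> : dissect k r (c%:P * b) = c%:P * dissect k r b.
  by apply/polyP => i; rewrite coefCM !coef_dissect coefCM.
have -> : dissect k r ('X^k * b) = 'X * dissect k r b.
  apply/polyP => -[|i]; rewrite coefXM !coef_dissect coefXnM /=.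
    by rewrite muln0 add0n ltrk.
  by rewrite ifF; [congr (b`_ _); lia | apply/negbTE; rewrite -leqNgt; nia].
by rewrite mulrA -mulrDl.
Qed.

Lemma dissect_Xn j : (j < k)%N -> dissect k r 'X^j = (j == r)%:R.
Proof.
move=> ltjk; apply/polyP => -[|i]; rewrite coef_dissect coefXn coefMn coef1 /=.
  by rewrite muln0 add0n [r == j]eq_sym; case: (j == r).
have /negbTE-> : (k * i.+1 + r != j)%N by nia.
by rewrite mul0rn.
Qed.

Lemma dissect_X : (1 < k)%N -> dissect k r 'X = (1 == r)%:R.
Proof. exact: dissect_Xn. Qed.

Lemma dissect_compXn a : dissect k r (a \Po 'X^k) = if r == 0%N then a else 0.
Proof.
rewrite -[_ \Po _]mulr1 dissect_compXnM -[1]/('X^0) dissect_Xn // eq_sym.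
by case: (r == 0%N); rewrite ?mulr1 ?mulr0.
Qed.

Lemma eqmodX_dissect M N p q : eqmodX M p q -> (k * N.-1 + r < M)%N ->
  eqmodX N (dissect k r p) (dissect k r q).
Proof.
move=> /eqmodXP Epq ltNM; apply/eqmodXP => i ltiN; rewrite !coef_dissect Epq //.
by apply: leq_ltn_trans ltNM; rewrite leq_add2r leq_mul2l -ltnS prednK ?orbT //; lia.
Qed.

End Dissection.

(** * Arithmetic modulo 2 *)

Local Notation F2 := 'F_2.

Lemma pchar_polyF2 : (2 \in [pchar {poly F2}])%N.
Proof. by rewrite pchar_poly; apply: pchar_Fp. Qed.

Lemma addrr_polyF2 (p : {poly F2}) : p + p = 0.
Proof. exact: addrr_pchar2 pchar_polyF2 p. Qed.

Lemma expr2_F2 (x : F2) : x ^+ 2 = x.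
Proof. by case: x => -[|[|//]] ?; apply/val_inj. Qed.

Lemma expr2_polyF2 (p : {poly F2}) : p ^+ 2 = p \Po 'X^2.
Proof.
elim/poly_ind: p => [|p c IHp]; first by rewrite expr0n comp_poly0.
rewrite sqrrD mulr2n addrr_polyF2 addr0 exprMn IHp -polyC_exp expr2_F2.
by rewrite comp_polyD comp_polyM comp_polyX comp_polyC.
Qed.

Lemma exp2n_polyF2 n (p : {poly F2}) : p ^+ (2 ^ n) = p \Po 'X^(2 ^ n).
Proof.
elim: n => [|n IHn]; first by rewrite expn0 !expr1 comp_polyXr.
by rewrite expnSr exprM IHn expr2_polyF2 -comp_polyA comp_Xn_poly -exprM mulnC.
Qed.

Lemma sum_natr_uniq (R : pzSemiRingType) (T : finType) (b : pred T) :
  {in b &, forall t u, t = u} -> \sum_t ((b t)%:R : R) = [exists t, b t]%:R.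
Proof.
move=> b_uniq; case: existsP => [[t0 bt0] | no_b]; last first.
  by apply: big1 => t _; case: (boolP (b t)) => // bt; case: no_b; exists t.
rewrite (bigD1 t0) //= bt0 big1 ?addr0 // => t ne_t_t0.
by case: (boolP (b t)) => // bt; case/eqP: ne_t_t0; apply: b_uniq.
Qed.

Lemma sum1_involution_pchar2 (R : nzSemiRingType) (T : finType) (S : pred T)
    (s : T -> T) : (2 \in [pchar R])%N ->
  {in S, forall t, S (s t)} -> {in S, forall t, s (s t) = t} ->
  \sum_(t | S t) (1 : R) = \sum_(t | S t && (s t == t)) 1.
Proof.
move=> pchar2 Ss sK; pose s' t := if S t then s t else t.
have s'K : involutive s'.
  move=> t; rewrite /s'; case: (boolP (S t)) => St; last by rewrite (negbTE St).
  by rewrite Ss // sK.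
rewrite (bigID (fun t => s t == t)) /= -[RHS]addr0; congr (_ + _).
(* The points moved by [s] come in pairs {t, s t}; [enum_rank] orders each pair. *)
pose r := @enum_rank T; rewrite (bigID (fun t => r t < r (s t))%N) /=.
set P := fun t => S t && (s t != t) && (r t < r (s t))%N.
rewrite [X in _ + X](reindex_inj (can_inj s'K)) [X in _ + X](eq_bigl P).
  by rewrite addrr_pchar2.
move=> t; rewrite /P /s'.
case: (boolP (S t)) => St /=; last by rewrite (negbTE St).
rewrite Ss // sK // [t == s t]eq_sym; case: eqP => //= ne_st_t.
rewrite -leqNgt leq_eqVlt /r val_eqE (inj_eq enum_rank_inj) eq_sym.
by rewrite (introF eqP ne_st_t).
Qed.

Definition is_square n := [exists x : 'I_n.+1, x * x == n]%N.

Lemma is_squareP n : reflect (exists x, x * x = n)%N (is_square n).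
Proof.
apply: (iffP existsP) => [[x /eqP <-] | [x xxn]]; first by exists x.
have ltxn : (x < n.+1)%N by nia.
by exists (Ordinal ltxn); apply/eqP.
Qed.

Lemma is_square_psqrM p n : prime p -> is_square (p ^ 2 * n) = is_square n.
Proof.
move=> p_pr; apply/is_squareP/is_squareP => [[z zE] | [w <-]]; last first.
  by exists (p * w)%N; ring.
have /dvdnP[w zw] : (p %| z)%N.
  by rewrite -(orbb (p %| z)%N) -Euclid_dvdM // zE expnS -mulnA dvdn_mulr.
have p2_gt0 : (0 < p ^ 2)%N by rewrite expn_gt0 prime_gt0.
by exists w; apply/eqP; rewrite -(eqn_pmul2l p2_gt0) -zE zw; apply/eqP; ring.
Qed.

Lemma is_square_pexpM p k n :
  prime p -> is_square (p ^ (2 * k) * n) = is_square n.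
Proof.
move=> p_pr; elim: k => [|k IHk]; first by rewrite mul1n.
by rewrite mulnS expnD -mulnA is_square_psqrM.
Qed.

Lemma sqr_mod8 x : (x * x %% 8 == 1)%N = odd x.
Proof.
rewrite -modnMm -(odd_mod x (erefl : odd 8 = false)).
have : (x %% 8 < 8)%N by rewrite ltn_pmod.
by move: (x %% 8)%N => r; do 8?case: r => [//|r].
Qed.

Lemma sqr_mod24 x : (x * x %% 24 == 1)%N = odd x && (x %% 3 != 0)%N.
Proof.
rewrite -modnMm -(odd_mod x (erefl : odd 24 = false)).
have -> : (x %% 3 = x %% 24 %% 3)%N by rewrite modn_dvdm.
have : (x %% 24 < 24)%N by rewrite ltn_pmod.
by move: (x %% 24)%N => r; do 24?case: r => [//|r].
Qed.

Lemma is_square_mod8 n : is_square n -> odd n -> (n %% 8 = 1)%N.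
Proof. by case/is_squareP => z <-; rewrite oddM andbb -sqr_mod8 => /eqP. Qed.

(** * Theta series *)

Section Theta.

Variable R : nzRingType.

Definition theta d c k K : {poly R} :=
  \sum_(x < K | (x * x %% d == c)%N) 'X^(k * (x * x %/ d)).

Lemma thetaSK d c k K : theta d c k K.+1 = theta d c k K +
  (if (K * K %% d == c)%N then 'X^(k * (K * K %/ d)) else 0).
Proof. by rewrite /theta big_mkcond [in RHS]big_mkcond big_ord_recr. Qed.

Lemma theta_compXn d c k K m : theta d c k K \Po 'X^m = theta d c (m * k) K.
Proof.
rewrite /theta raddf_sum; apply: eq_bigr => x _.
by rewrite /= comp_Xn_poly -exprM mulnA.
Qed.

Lemma coef_theta d c k K e : (0 < k)%N -> (c < d)%N -> (d * e + c < K * K)%N ->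
  (theta d c k K)`_e = ((k %| e) && is_square (d * (e %/ k) + c))%N%:R.
Proof.
move=> k_gt0 ltcd ltK; have d_gt0 : (0 < d)%N by apply: leq_ltn_trans ltcd.
rewrite /theta coef_sum big_mkcond /=.
rewrite (eq_bigr (fun x : 'I_K =>
    ((x * x %% d == c) && (k * (x * x %/ d) == e))%N%:R)); last first.
  by move=> x _; case: ifP => _; rewrite ?coefXn 1?eq_sym.
rewrite sum_natr_uniq => [|x y /andP[/eqP xc /eqP xe] /andP[/eqP yc /eqP ye]].
  congr (nat_of_bool _)%:R; apply/existsP/andP => [[x /andP[/eqP xc /eqP <-]] | []].
    split; first exact: dvdn_mulr.
    by apply/is_squareP; exists x; rewrite mulKn // -xc mulnC -divn_eq.
  move=> /dvdnP[f Ef]; rewrite Ef mulnK // => /is_squareP[z zE].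
  have ltzK : (z < K)%N.
    suff : (z * z < K * K)%N by rewrite -[(z < K)%N]ltn_sqr -!mulnn.
    by rewrite zE (leq_ltn_trans _ ltK) // leq_add2r leq_mul2l Ef leq_pmulr ?orbT.
  exists (Ordinal ltzK); rewrite /= zE [(d * f)%N]mulnC modnMDl modn_small //.
  by rewrite divnMDl // divn_small // addn0 mulnC !eqxx.
apply: val_inj; apply/eqP; rewrite -eqn_sqr -!mulnn.
rewrite (divn_eq (x * x) d) (divn_eq (y * y) d) xc yc.
by have /eqP-> : (x * x %/ d == y * y %/ d)%N by rewrite -(eqn_pmul2l k_gt0) xe ye.
Qed.

Lemma eqmodX_theta d c k N K K' : (0 < k)%N -> (c < d)%N ->
    (d * N + c < K * K)%N -> (d * N + c < K' * K')%N ->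
  eqmodX N.+1 (theta d c k K) (theta d c k K').
Proof.
move=> k_gt0 ltcd ltK ltK'; apply/eqmodXP => i ltiN.
have le_iN : (d * i + c <= d * N + c)%N by rewrite leq_add2r leq_mul2l -ltnS ltiN orbT.
by rewrite !coef_theta // (leq_ltn_trans le_iN).
Qed.

Lemma coef_thetaM d1 c1 k1 d2 c2 k2 K e :
  (theta d1 c1 k1 K * theta d2 c2 k2 K)`_e =
  \sum_(x < K) \sum_(y < K) [&& x * x %% d1 == c1, y * y %% d2 == c2
                      & k1 * (x * x %/ d1) + k2 * (y * y %/ d2) == e]%N%:R.
Proof.
rewrite /theta big_distrl coef_sum big_mkcond; apply: eq_bigr => x _ /=.
case: ifP => _ /=; last by rewrite big1.
rewrite big_distrr coef_sum big_mkcond; apply: eq_bigr => y _ /=.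
by case: ifP => _; rewrite ?mulr0 ?coef0 // -exprD coefXn eq_sym.
Qed.

End Theta.

(* [psi] is psi(q), with x = 2n + 1; [euler] is f_1 mod 2, with x = 6n +- 1. *)
Local Notation psi := (@theta F2 8 1).
Local Notation euler := (@theta F2 24 1).

Lemma psi_exp2n n K : psi 1 K ^+ (2 ^ n) = psi (2 ^ n) K.
Proof. by rewrite exp2n_polyF2 theta_compXn muln1. Qed.

(** * Odd solutions of x^2 + 3 y^2 = 4 M *)

(* [m - n + (n - m)] is the distance [|m - n|].  Writing a solution of
   [x^2 + 3 y^2 = 4 M] as the Eisenstein integer [(x + y sqrt(-3)) / 2], the
   partner is its product with the unit [(1 -+ sqrt(-3)) / 2], up to signs,
   chosen so that the coordinates stay odd. *)
Definition partner (xy : nat * nat) : nat * nat :=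
  let: (x, y) := xy in
  let a := ((x + 3 * y) %/ 2)%N in
  if odd a then (a, (x - y + (y - x)) %/ 2)%N
  else ((x - 3 * y + (3 * y - x)) %/ 2, (x + y) %/ 2)%N.

Section Partner.

Variables x y : nat.
Hypotheses (odd_x : odd x) (odd_y : odd y).

Lemma partner_odd : odd (partner (x, y)).1 && odd (partner (x, y)).2.
Proof. by rewrite /partner; case: ifP => /= odd_a; apply/andP; split; lia. Qed.

Lemma partner_norm : let: (a, b) := partner (x, y) in
  (a * a + 3 * (b * b) = x * x + 3 * (y * y))%N.
Proof.
rewrite /partner; case: ifP => _.
  have [le_yx | lt_xy] := leqP y x.
    have [b ->] : exists b, x = (2 * b + y)%N by exists ((x - y) %/ 2)%N; lia.
    have -> : ((2 * b + y + 3 * y) %/ 2 = b + 2 * y)%N by lia.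
    have -> : ((2 * b + y - y + (y - (2 * b + y))) %/ 2 = b)%N by lia.
    ring.
  have [b ->] : exists b, y = (2 * b + x)%N by exists ((y - x) %/ 2)%N; lia.
  have -> : ((x + 3 * (2 * b + x)) %/ 2 = 2 * x + 3 * b)%N by lia.
  have -> : ((x - (2 * b + x) + (2 * b + x - x)) %/ 2 = b)%N by lia.
  ring.
have [le_3yx | lt_x3y] := leqP (3 * y) x.
  have [a ->] : exists a, x = (2 * a + 3 * y)%N by exists ((x - 3 * y) %/ 2)%N; lia.
  have -> : ((2 * a + 3 * y - 3 * y + (3 * y - (2 * a + 3 * y))) %/ 2 = a)%N by lia.
  have -> : ((2 * a + 3 * y + y) %/ 2 = a + 2 * y)%N by lia.
  ring.
have [a Ea] : exists a, (3 * y = 2 * a + x)%N by exists ((3 * y - x) %/ 2)%N; lia.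
have -> : ((x - 3 * y + (3 * y - x)) %/ 2 = a)%N by lia.
have [b Eb] : exists b, (x + y = 2 * b)%N by exists ((x + y) %/ 2)%N; lia.
rewrite (_ : (x + y) %/ 2 = b)%N; last by lia.
nia.
Qed.

Lemma partnerK : partner (partner (x, y)) = (x, y).
Proof.
rewrite {2}/partner; case: ifP => odd_a; rewrite /partner /=; case: ifP => /= ?;
  congr pair; lia.
Qed.

Lemma partner_fix : (partner (x, y) == (x, y)) = (x == y) || (x == 3 * y)%N.
Proof.
rewrite /partner; case: ifP => odd_a; rewrite xpair_eqE;
  apply/andP/orP => [[/eqP ? /eqP ?] | [/eqP ? | /eqP ?]]; (left + right + split); lia.
Qed.

End Partner.

Section OddRepresentations.

Variables K M : nat.
Hypotheses (odd_M : odd M) (ltMK : (4 * M < K * K)%N).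

Let T := ('I_K * 'I_K)%type.
Let val2 (t : T) : nat * nat := (val t.1, val t.2).
Let rep (t : T) := [&& odd t.1, odd t.2 & t.1 * t.1 + 3 * (t.2 * t.2) == 4 * M]%N.
Let partnerI (t : T) : T :=
  let ab := partner (val2 t) in (insubd t.1 ab.1, insubd t.2 ab.2).

Let ltK m : (m * m <= 4 * M)%N -> (m < K)%N.
Proof. by move=> ?; rewrite -ltn_sqr -!mulnn; lia. Qed.

Let val2_inj : injective val2.
Proof. by move=> [a b] [c d] [/val_inj-> /val_inj->]. Qed.

Let val2_partnerI t : rep t -> val2 (partnerI t) = partner (val2 t).
Proof.
case/and3P => odd1 odd2 /eqP norm_t; rewrite /partnerI /val2.
have := partner_norm odd1 odd2; case: (partner _) => a b norm_ab /=.
have [ltaK ltbK] : (a < K)%N /\ (b < K)%N by split; apply: ltK; lia.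
by rewrite !val_insubd ltaK ltbK.
Qed.

Let rep_partnerI t : rep t -> rep (partnerI t).
Proof.
move=> rep_t; have /and3P[odd1 odd2 /eqP norm_t] := rep_t.
have := val2_partnerI rep_t; rewrite /rep /val2.
have := partner_odd odd1 odd2; have := partner_norm odd1 odd2.
case: (partner _) => a b /= norm_ab /andP[odd_a odd_b] [-> ->].
by rewrite odd_a odd_b norm_ab norm_t /=.
Qed.

Let partnerIK t : rep t -> partnerI (partnerI t) = t.
Proof.
move=> rep_t; apply: val2_inj; rewrite !val2_partnerI ?rep_partnerI //.
by case/and3P: rep_t => odd1 odd2 _; apply: partnerK.
Qed.

Let partnerI_fix t : rep t ->
  (partnerI t == t) = (t.1 == t.2 :> nat) || (t.1 == 3 * t.2 :> nat)%N.
Proof.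
move=> rep_t; rewrite -(inj_eq val2_inj) val2_partnerI //.
by case/and3P: rep_t => odd1 odd2 _; apply: partner_fix.
Qed.

Let sum1E (P : pred T) : \sum_(t | P t) (1 : F2) = \sum_t (P t)%:R.
Proof. by rewrite big_mkcond; apply: eq_bigr => t _; case: (P t). Qed.

Let sum_rep_diag :
  \sum_(t | rep t && (t.1 == t.2 :> nat)) (1 : F2) = (is_square M)%:R.
Proof.
rewrite sum1E sum_natr_uniq => [|[a b] [c d] /andP[/and3P[_ _ /eqP ab] /eqP eab]].
  congr (nat_of_bool _)%:R; apply/existsP/is_squareP => [[[a b]] | [z zz]].
    case/andP=> /and3P[_ _ /eqP /= ab] /eqP /= eab.
    by exists a; move: ab; rewrite -eab; lia.
  have ltzK : (z < K)%N by apply: ltK; lia.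
  have odd_z : odd z by move: odd_M; rewrite -zz oddM andbb.
  by exists (Ordinal ltzK, Ordinal ltzK); rewrite /rep /= odd_z zz; apply/eqP; lia.
case/andP=> /and3P[_ _ /eqP cd] /eqP /= ecd; rewrite /= in ab cd eab ecd.
have eac : a = c :> nat by apply/eqP; rewrite -eqn_sqr -!mulnn; lia.
by congr pair; apply: val_inj; rewrite //= -eab -ecd.
Qed.

Let sum_rep_triple : \sum_(t | rep t && (t.1 == 3 * t.2 :> nat)%N) (1 : F2) =
  ((3 %| M) && is_square (M %/ 3))%N%:R.
Proof.
rewrite sum1E sum_natr_uniq => [|[a b] [c d] /andP[/and3P[_ _ /eqP ab] /eqP eab]].
  congr (nat_of_bool _)%:R; apply/existsP/andP => [[[a b]] | [/dvdnP[w Mw]]].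
    case/andP=> /and3P[_ _ /eqP /= ab] /eqP /= eab; move: ab; rewrite eab => ab.
    have -> : M = (3 * (b * b))%N by lia.
    by split; [apply: dvdn_mulr | apply/is_squareP; exists b; rewrite mulKn].
  rewrite Mw mulnK // => /is_squareP[z zz].
  have lt3zK : (3 * z < K)%N by apply: ltK; rewrite Mw -zz; nia.
  have ltzK : (z < K)%N by lia.
  have odd_z : odd z by move: odd_M; rewrite Mw -zz !oddM andbb andbT.
  exists (Ordinal lt3zK, Ordinal ltzK); rewrite /rep /= oddM odd_z eqxx /=.
  by rewrite Mw -zz; apply/eqP; nia.
case/andP=> /and3P[_ _ /eqP cd] /eqP ecd; rewrite /= in ab cd eab ecd.
have ebd : b = d :> nat by apply/eqP; rewrite -eqn_sqr -!mulnn; nia.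
by congr pair; apply: val_inj; rewrite //= eab ecd ebd.
Qed.

Lemma sum_odd_reps :
  \sum_(x < K) \sum_(y < K)
    ([&& odd x, odd y & x * x + 3 * (y * y) == 4 * M]%N%:R : F2) =
  (is_square M)%:R + ((3 %| M) && is_square (M %/ 3))%N%:R.
Proof.
transitivity (\sum_(t | rep t) (1 : F2)); first by rewrite sum1E pair_bigA.
rewrite (sum1_involution_pchar2 (pchar_Fp (isT : prime 2)) rep_partnerI partnerIK).
rewrite (bigID (fun t : T => t.1 == t.2 :> nat)) /=; congr (_ + _).
  rewrite -sum_rep_diag; apply: eq_bigl => t; case: (boolP (rep t)) => //= rep_t.
  by rewrite partnerI_fix //; case: eqP; rewrite ?andbF.
rewrite -sum_rep_triple; apply: eq_bigl => t; case: (boolP (rep t)) => //= rep_t.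
rewrite partnerI_fix //; case: eqP => [eq12 | _]; last by rewrite andbT.
by case/and3P: rep_t => _ odd2 _; rewrite /= eq12; apply/esym/negbTE/eqP; lia.
Qed.

End OddRepresentations.

Lemma psi_euler N K : (24 * N + 4 <= K * K)%N ->
  eqmodX N (psi 1 K * euler 1 K) (euler 4 K).
Proof.
move=> leNK; apply/eqmodXP => i ltiN; rewrite coef_thetaM exchange_big /=.
transitivity (\sum_(y < K) \sum_(x < K)
    ([&& odd y, odd x & y * y + 3 * (x * x) == 4 * (6 * i + 1)]%N%:R : F2)).
  apply: eq_bigr => y _; apply: eq_bigr => x _.
  rewrite -(sqr_mod8 x) -[odd y]andbb -oddM.
  by move: (x * x)%N (y * y)%N => X Y; congr (nat_of_bool _)%:R; lia.
rewrite sum_odd_reps; [|lia|lia].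
have -> : (3 %| 6 * i + 1)%N = false by lia.
rewrite addr0 coef_theta //; last by lia.
congr (nat_of_bool _)%:R; apply/idP/andP => [sq | [/dvdnP[j ->]]].
  have mod8 : ((6 * i + 1) %% 8 = 1)%N by apply: is_square_mod8 sq _; lia.
  by rewrite (_ : 24 * (i %/ 4) + 1 = 6 * i + 1)%N //; lia.
by rewrite mulnK // (_ : 24 * j + 1 = 6 * (j * 4) + 1)%N //; lia.
Qed.

Lemma psi_psi3 N K : (8 * N + 4 <= K * K)%N ->
  eqmodX N (psi 1 K * psi 3 K) (psi 4 K + 'X * psi 12 K).
Proof.
move=> leNK; apply/eqmodXP => i ltiN; rewrite coef_thetaM.
transitivity (\sum_(x < K) \sum_(y < K)
    ([&& odd x, odd y & x * x + 3 * (y * y) == 4 * (2 * i + 1)]%N%:R : F2)).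
  apply: eq_bigr => x _; apply: eq_bigr => y _; rewrite -(sqr_mod8 x) -(sqr_mod8 y).
  by move: (x * x)%N (y * y)%N => X Y; congr (nat_of_bool _)%:R; lia.
rewrite sum_odd_reps; [|lia|lia].
rewrite coefD coefXM coef_theta //; last by lia.
congr (_ + _).
  congr (nat_of_bool _)%:R; apply/idP/andP => [sq | [/dvdnP[j ->]]].
    have mod8 : ((2 * i + 1) %% 8 = 1)%N by apply: is_square_mod8 sq _; lia.
    by rewrite (_ : 8 * (i %/ 4) + 1 = 2 * i + 1)%N //; lia.
  by rewrite mulnK // (_ : 8 * j + 1 = 2 * (j * 4) + 1)%N //; lia.
case: i ltiN => [|j] ltjN /=; first by [].
rewrite coef_theta //; last by lia.
congr (nat_of_bool _)%:R; apply/andP/andP => [[d3 sq] | [/dvdnP[t ->] sq]].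
  have mod8 : ((2 * j.+1 + 1) %/ 3 %% 8 = 1)%N by apply: is_square_mod8 sq _; lia.
  by rewrite (_ : 8 * (j %/ 12) + 1 = (2 * j.+1 + 1) %/ 3)%N //; lia.
split; first by lia.
by rewrite (_ : (2 * (t * 12).+1 + 1) %/ 3 = 8 * (t * 12 %/ 12) + 1)%N //; lia.
Qed.

(** * Euler's pentagonal theorem and Jacobi's identity mod 2 *)

Definition pochF2 k N : {poly F2} := \prod_(1 <= j < N.+1) (1 + 'X^(k * j)).

Lemma pochF2_compXn k N : pochF2 k N = pochF2 1 N \Po 'X^k.
Proof.
rewrite /pochF2 rmorph_prod; apply: eq_bigr => j _.
by rewrite rmorphD /= comp_polyC comp_Xn_poly -exprM mul1n.
Qed.

Lemma pochF2_sqr k N : pochF2 k N ^+ 2 = pochF2 (2 * k) N.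
Proof.
rewrite (exp2n_polyF2 1) (pochF2_compXn k) -comp_polyA comp_Xn_poly -exprM.
by rewrite -pochF2_compXn.
Qed.

Lemma pochF2_coef0 k N : (0 < k)%N -> (pochF2 k N)`_0 = 1.
Proof.
move=> k_gt0; rewrite -horner_coef0 horner_prod big_nat big1 // => j /andP[j_gt0 _].
by rewrite hornerD hornerC hornerXn expr0n muln_eq0 !eqn0Ngt k_gt0 j_gt0 addr0.
Qed.

(* Shanks' finite form of Euler's pentagonal number theorem, read mod 2. *)
Definition shanks_term n k : {poly F2} :=
  'X^(n * k + 'C(k.+1, 2)) * \prod_(k.+1 <= i < n.+1) (1 + 'X^i).

Definition shanks n := \sum_(0 <= k < n.+1) shanks_term n k.

Lemma shanks_termSn n k : (k <= n)%N ->
  shanks_term n.+1 k = 'X^k * (1 + 'X^(n.+1)) * shanks_term n k.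
Proof.
move=> le_kn; rewrite /shanks_term big_nat_recr /=; last by lia.
by rewrite mulSn -addnA exprD; ring.
Qed.

Lemma shanks_termSk n k : (k < n)%N ->
  shanks_term n k.+1 * (1 + 'X^(k.+1)) = 'X^(n + k.+1) * shanks_term n k.
Proof.
move=> lt_kn; rewrite /shanks_term [in RHS]big_ltn; last by lia.
rewrite (_ : n * k.+1 + 'C(k.+2, 2) = n + k.+1 + (n * k + 'C(k.+1, 2)))%N.
  by rewrite exprD; ring.
by rewrite binS bin1 mulnS; lia.
Qed.

Lemma shanks_term_diag n : shanks_term n n = 'X^(n * n + 'C(n.+1, 2)).
Proof. by rewrite /shanks_term big_geq // mulr1. Qed.

Lemma shanksS n : shanks n.+1 =
  shanks n + 'X^(n.+1 * n + 'C(n.+2, 2)) + 'X^(n.+1 * n.+1 + 'C(n.+2, 2)).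
Proof.
rewrite /shanks big_nat_recr //= shanks_term_diag; congr (_ + _).
pose v k := 'X^(n.+1 + k) * shanks_term n k.
have -> : \sum_(0 <= k < n.+1) shanks_term n.+1 k =
    \sum_(0 <= k < n.+1) shanks_term n k +
    \sum_(0 <= k < n.+1) ((1 + 'X^k) * shanks_term n k) + \sum_(0 <= k < n.+1) v k.
  rewrite -!big_split; apply: eq_big_nat => k /andP[_ le_kn] /=.
  rewrite shanks_termSn // /v; set u := shanks_term n k.
  rewrite (_ : u + _ + _ = u + u + 'X^k * (1 + 'X^(n.+1)) * u); last first.
    by rewrite exprD; ring.
  by rewrite addrr_polyF2 add0r.
have -> : \sum_(0 <= k < n.+1) ((1 + 'X^k) * shanks_term n k) =
    \sum_(0 <= k < n) v k.
  rewrite big_ltn // expr0 addrr_polyF2 mul0r add0r big_add1 /=.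
  by apply: eq_big_nat => k /andP[_ lt_kn]; rewrite mulrC shanks_termSk // /v addSnnS.
rewrite [\sum_(0 <= k < n.+1) v k]big_nat_recr //= -addrA (addKr_pchar2 pchar_polyF2).
rewrite /v shanks_term_diag -exprD.
by congr (_ + 'X^_); rewrite (binS n.+1 1) bin1; lia.
Qed.

Lemma eulerS n : euler 1 (6 * n.+1 + 2) =
  euler 1 (6 * n + 2) + 'X^(n.+1 * n + 'C(n.+2, 2)) + 'X^(n.+1 * n.+1 + 'C(n.+2, 2)).
Proof.
have [m Em] : exists m, m = (6 * n + 2)%N by exists (6 * n + 2)%N.
rewrite -Em (_ : 6 * n.+1 + 2 = m + 6)%N ?Em //; last by lia.
rewrite -Em !addnS addn0 !thetaSK !sqr_mod24 -!addrA; congr (_ + _).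
(* Of 6n+2, ..., 6n+7 only 6n+5 and 6n+7 are prime to 6. *)
do 6 (case: ifP => ?; try (exfalso; lia)).
rewrite !add0r !mul1n; have double := mul_bin_left n.+2 1; rewrite bin1 in double.
have sq5 : (m.+3 * m.+3 = (n.+1 * n + 'C(n.+2, 2)) * 24 + 1)%N.
  by nia.
have sq7 : (m.+4.+1 * m.+4.+1 = (n.+1 * n.+1 + 'C(n.+2, 2)) * 24 + 1)%N.
  by nia.
by rewrite sq5 sq7 !divnMDl // !divn_small // !addn0.
Qed.

Lemma shanks_euler n : shanks n = euler 1 (6 * n + 2).
Proof.
elim: n => [|n IHn]; last by rewrite shanksS eulerS IHn.
by rewrite /shanks big_nat1 shanks_term_diag muln0 !thetaSK /theta big_ord0 /= !add0r.
Qed.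

Lemma pochF2_euler N : eqmodX N.+1 (pochF2 1 N) (euler 1 (6 * N + 2)).
Proof.
rewrite -shanks_euler /shanks big_ltn // /shanks_term muln0 add0n mul1r.
rewrite -[pochF2 1 N]addr0; apply: eqmodXD.
  by rewrite /pochF2; under eq_bigr do rewrite mul1n.
apply/eqmodXP => i ltiN; rewrite coef_sum coef0 big_nat big1 // => k /andP[k_gt0 _].
have bin_k_gt0 : (0 < 'C(k.+1, 2))%N by rewrite bin_gt0.
by rewrite coefXnM ifT //; nia.
Qed.

(* Jacobi's identity mod 2: cancel f_1 in psi(q) f_1 = f_1(q^4) = f_1^4. *)
Lemma pochF2_cube_psi N K : (24 * N + 28 <= K * K)%N ->
  eqmodX N.+1 (pochF2 1 N ^+ 3) (psi 1 K).
Proof.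
move=> leNK; set D := pochF2 1 N.
have DE : eqmodX N.+1 D (euler 1 K).
  by apply: etrans (pochF2_euler N) _; apply: eqmodX_theta; nia.
apply/esym/(@eqmodX_mulIr _ _ _ _ D); first exact: pochF2_coef0.
rewrite -exprSr (exp2n_polyF2 2 D : D ^+ 4 = _).
apply: etrans (eqmodXMl _ DE) _.
apply: etrans (psi_euler (N := N.+1) _) _; first by nia.
rewrite -[4%N]muln1 -theta_compXn.
by apply: eqmodX_le (eqmodX_comp _ (esym DE)); lia.
Qed.

(** * The coefficients J_6(24 n + 3) mod 2 *)

Lemma dissect_psi M K : (8 * (3 * M) + 9 <= K * K)%N ->
  eqmodX M (dissect 3 1 (psi 1 K)) (psi 3 K).
Proof.
move=> leMK; apply/eqmodXP => i ltiM.
rewrite coef_dissect // !coef_theta //; [|lia|lia]; rewrite dvd1n divn1 /=.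
congr (nat_of_bool _)%:R.
apply/idP/andP => [/is_squareP[z zE] | [/dvdnP[j ->] /is_squareP[w wE]]].
  have /dvdnP[w zw] : (3 %| z)%N.
    by rewrite -(orbb (3 %| z)%N) -Euclid_dvdM // zE; lia.
  rewrite zw in zE; split; first by lia.
  by apply/is_squareP; exists w; lia.
by apply/is_squareP; exists (3 * w)%N; rewrite mulnK // in wE; nia.
Qed.

Section PsiOverF3Pow9.

Variables (m K : nat) (Q : {poly F2}).
Local Notation N := (24 * m + 4)%N.
Hypotheses (leNK : (24 * N + 28 <= K * K)%N)
           (QE : eqmodX N.+1 (Q * pochF2 3 N ^+ 9) (psi 1 K)).
Local Notation ps := (psi 1 K).

Let G := dissect 3 1 Q.

Let psi_cube_G : eqmodX (8 * m + 2) (ps ^+ 3 * G) (psi 3 K).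
Proof.
have D3 : eqmodX N.+1 (pochF2 1 N ^+ 9) (ps ^+ 3).
  by rewrite (exprM _ 3 3); apply: eqmodXX; apply: pochF2_cube_psi.
have DG : eqmodX (8 * m + 2) (pochF2 1 N ^+ 9 * G) (dissect 3 1 ps).
  rewrite -dissect_compXnM // (_ : _ \Po _ = pochF2 3 N ^+ 9); last first.
    by rewrite (pochF2_compXn 3) rmorphXn.
  by rewrite mulrC; apply: eqmodX_dissect QE _; lia.
apply: etrans (etrans (esym _) DG) (dissect_psi _); last by nia.
by apply: eqmodXMr; apply: eqmodX_le D3; lia.
Qed.

Let psi4_G : eqmodX (8 * m + 2) (psi 4 K * G) (psi 4 K + 'X * psi 12 K).
Proof.
have -> : psi 4 K * G = ps * (ps ^+ 3 * G).
  by rewrite mulrA -exprS (psi_exp2n 2 K : _ = psi 4 K).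
by apply: etrans (eqmodXMl ps psi_cube_G) (psi_psi3 _); nia.
Qed.

Let H := dissect 4 1 G.

Let psi_H : eqmodX (2 * m + 1) (ps * H) (psi 3 K).
Proof.
have := eqmodX_dissect (N := (2 * m + 1)%N) (isT : 0 < 4)%N (isT : 1 < 4)%N psi4_G.
rewrite -[psi 4 K]/(psi (4 * 1) K) -[psi 12 K]/(psi (4 * 3) K) -!theta_compXn.
rewrite dissect_compXnM // dissectD // (dissect_compXn (k := 4)) // add0r (mulrC 'X).
by rewrite dissect_compXnM // dissect_X // mulr1; apply; lia.
Qed.

Let psi4_H : eqmodX (2 * m + 1) (psi 4 K * H) (psi 2 K * (psi 4 K + 'X * psi 12 K)).
Proof.
have -> : psi 4 K * H = ps ^+ 3 * (ps * H).
  by rewrite mulrA -exprSr (psi_exp2n 2 K : _ = psi 4 K).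
apply: etrans (eqmodXMl _ psi_H) _.
have -> : ps ^+ 3 * psi 3 K = psi 2 K * (ps * psi 3 K).
  by rewrite mulrA -(psi_exp2n 1 K : _ = psi 2 K) -exprSr.
by apply: eqmodXMl; apply: psi_psi3; nia.
Qed.

Let L := dissect 2 0 H.

Let psi2_L : eqmodX (m + 1) (psi 2 K * L) (psi 2 K * ps).
Proof.
have := eqmodX_dissect (N := (m + 1)%N) (isT : 0 < 2)%N (isT : 0 < 2)%N psi4_H.
have -> : psi 2 K * (psi 4 K + 'X * psi 12 K) =
    (ps * psi 2 K) \Po 'X^2 + ((ps * psi 6 K) \Po 'X^2) * 'X.
  by rewrite !rmorphM /= !theta_compXn mulrDr -mulrA (mulrC 'X).
rewrite -[psi 4 K]/(psi (2 * 2) K) -theta_compXn dissect_compXnM //.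
rewrite dissectD // !(dissect_compXn (k := 2)) // dissect_compXnM // dissect_X //.
by rewrite mulr0 addr0 (mulrC ps); apply; lia.
Qed.

Lemma coef_24m4 : Q`_N = (is_square (8 * m + 1))%:R.
Proof.
have psi2_0 : (psi 2 K)`_0 = 1.
  rewrite coef_theta //; last by nia.
  by rewrite dvdn0 div0n muln0 (introT (is_squareP 1) (ex_intro _ 1%N erefl)).
have /eqmodXP/(_ m) : eqmodX (m + 1) L ps.
  by apply: (eqmodX_mulIr psi2_0); rewrite mulrC (mulrC ps); apply: psi2_L.
rewrite /L /H /G !coef_dissect // coef_theta //; last by nia.
rewrite dvd1n divn1 (_ : 3 * (4 * (2 * m + 0) + 1) + 1 = N)%N; last by lia.
by apply; lia.
Qed.

End PsiOverF3Pow9.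

Local Notation mod2 := (map_poly (intr : int -> F2)).

Lemma mod2_qpoch_tr k N : mod2 (qpoch_tr k N) = pochF2 k N.
Proof.
rewrite /qpoch_tr /pochF2 rmorph_prod; apply: eq_bigr => j _.
by rewrite rmorphB rmorph1 rmorphXn /= map_polyX (oppr_pchar2 pchar_polyF2).
Qed.

Lemma pochF2_mod2_qpoch_inv_tr k N : (0 < k)%N ->
  eqmodX N.+1 (pochF2 k N * mod2 (qpoch_inv_tr k N)) 1.
Proof.
move=> k_gt0; rewrite /pochF2 /qpoch_inv_tr rmorph_prod -big_split /=.
apply: eqmodX_prod1 => j /andP[j_gt0 _].
rewrite rmorph_sum big_mkord (eq_bigr (fun i : 'I_N.+1 => 'X^(k * j) ^+ i)); last first.
  by move=> i _; rewrite rmorphXn /= map_polyX exprM.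
rewrite addrC -[in X in X * _](oppr_pchar2 pchar_polyF2 1) -subrX1 -exprM.
apply/eqmodXP => i ltiN; rewrite (oppr_pchar2 pchar_polyF2) coefD coefXn.
by rewrite (_ : (i == _) = false) ?mulr0n ?add0r //; apply: negbTE; nia.
Qed.

Lemma mod2_P_tr N :
  eqmodX N.+1 (mod2 (P_tr N) * pochF2 3 N ^+ 9) (pochF2 1 N ^+ 3).
Proof.
rewrite /P_tr !rmorphXn /= !rmorphM /= !mod2_qpoch_tr.
rewrite -[pochF2 2 N]/(pochF2 (2 * 1) N) -pochF2_sqr.
rewrite [X in eqmodX _ X _](_ : _ = (pochF2 1 N * (pochF2 1 N * mod2 (qpoch_inv_tr 1 N)) *
    (pochF2 3 N ^+ 2 * mod2 (qpoch_inv_tr 6 N)) ^+ 3) ^+ 3); last by ring.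
rewrite -[X in eqmodX _ _ X](_ : (pochF2 1 N * 1 * 1 ^+ 3) ^+ 3 = _); last first.
  by rewrite expr1n !mulr1.
rewrite pochF2_sqr; apply/eqmodXX/eqmodXM; [apply: eqmodXMl | apply: eqmodXX];
  exact: pochF2_mod2_qpoch_inv_tr.
Qed.

Lemma Pcoef_mod2 m : (Pcoef (24 * m + 4))%:~R = (is_square (8 * m + 1))%:R :> F2.
Proof.
set N := (24 * m + 4)%N; set K := (24 * N + 28)%N.
have leNK : (24 * N + 28 <= K * K)%N by rewrite leq_pmulr // addn_gt0 orbT.
rewrite /Pcoef -coef_map; apply: (coef_24m4 leNK).
exact: etrans (mod2_P_tr N) (pochF2_cube_psi leNK).
Qed.

Lemma J6_mod2 n : (J6 (24 * n + 3))%:~R = (is_square (8 * n + 1))%:R :> F2.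
Proof. by rewrite /J6 -addnS -Pcoef_mod2 addn3 subr0. Qed.

Lemma eqz_mod2_F2 (a b : int) : a%:~R = b%:~R :> F2 -> (a = b %[mod 2])%Z.
Proof.
move=> Eab; apply/eqP; rewrite eqz_mod_dvd (dvdz_pcharf (pchar_Fp _)) //.
by rewrite rmorphB /= Eab subrr.
Qed.

Local Close Scope ring_scope.

Theorem corollary3p7 (k p : nat) :
  (0 < k)%N -> prime p -> (p %% 8 \in [:: 3; 5; 7])%N ->
  forall n : nat,
    (J6 (24 * n + 3) = J6 (3 * p ^ (2 * k) * (8 * n + 1)) %[mod 2])%Z.
Proof.
move=> _ p_pr p_mod8 n.
have odd_p : odd p.
  rewrite -(odd_mod p (erefl : odd 8 = false)).
  by move: p_mod8; rewrite !inE => /or3P[] /eqP ->.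
have [m Em] : exists m, p ^ (2 * k) * (8 * n + 1) = 8 * m + 1.
  have pk8 : p ^ (2 * k) %% 8 = 1.
    by apply/eqP; rewrite mulnC expnM -mulnn sqr_mod8 oddX odd_p orbT.
  have : p ^ (2 * k) * (8 * n + 1) %% 8 = 1 by rewrite -modnMm pk8 mul1n; lia.
  by move: (_ * _) => x x8; exists (x %/ 8); lia.
rewrite -mulnA Em (_ : 3 * (8 * m + 1) = 24 * m + 3); last by lia.
by apply: eqz_mod2_F2; rewrite !J6_mod2 -Em is_square_pexpM.
Qed.
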